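(* Let $A$ be a commutative $\mathbb Q$-algebra, $a\in A$ a non-zero-divisor, $B=A[z]$ and $\mathcal D=\partial_z-a:B\to B$, $h\mapsto h'-ah$. Let $f=c_0+c_1z+\cdots+c_dz^d\in B$ be such that $v_a(c_i)\ge i$ for $0\le i\le d$, and such that for some $t\le d$ we have $v_a(c_t)\ge t+1$. Put $\tilde f=f-c_tz^t$. If $f^m\in\mathrm{Im}\,\mathcal D$ for some $m\ge1$, then $\tilde f^m\in\mathrm{Im}\,\mathcal D$.
   Context: For $c\in A$, the $a$-order $v_a(c)\in\mathbb Z_{\ge0}\cup\{\infty\}$ is the supremum of the integers $m\ge0$ with $c\in Aa^m$ (so $v_a(c)=\infty$ if $c\in\bigcap_{m\ge1}Aa^m$). *)

From HB Require Import structures.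
From mathcomp Require Import all_boot all_order all_algebra.
Set Implicit Arguments. Unset Strict Implicit. Unset Printing Implicit Defensive.
Import GRing.Theory.
Local Open Scope ring_scope.

Definition in_pow_ideal (A : comAlgType rat) (a c : A) (m : nat) : Prop :=
  exists r : A, c = r * a ^+ m.

(* v_a(c) >= i, where v_a(c) = sup { m | c \in A a^m } in N u {oo}:
   the supremum is >= i iff some m >= i has c \in A a^m. *)
Definition vord_ge (A : comAlgType rat) (a c : A) (i : nat) : Prop :=
  exists m : nat, (i <= m)%N /\ in_pow_ideal a c m.

Definition in_imD (A : comAlgType rat) (a : A) (f : {poly A}) : Prop :=
  exists h : {poly A}, h^`() - a%:P * h = f.

(* If every coefficient c_k of g lies in A a^(k+1), then g is in the image of
   D = d/dz - a: the monomial c a^(k+1) z^k equals D(-c a^k z^k) plus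
   k c a^k z^(k-1), a monomial of the same shape and lower degree, so induction
   on k applies (no division by k is involved).  Writing f~ = f + (f~ - f), the
   coefficient of z^k in f^i lies in A a^k, and that of f~ - f in A a^(k+1);
   hence f~^m - f^m = (f~ - f) * sum_i f~^(m-1-i) f^i has all its coefficients
   of the latter kind, so f~^m - f^m lies in Im D. *)
From HB Require Import structures.
From mathcomp Require Import all_boot all_order all_algebra.
Set Implicit Arguments. Unset Strict Implicit. Unset Printing Implicit Defensive.
Import GRing.Theory.
Local Open Scope ring_scope.

Section CoefsDivPow.
Variables (R : comNzRingType) (a : R).

Definition coefs_div_pow (e : nat) (p : {poly R}) :=
  forall k, exists r, p`_k = r * a ^+ (k + e).

Definition imD (p : {poly R}) := exists h : {poly R}, h^`() - a%:P * h = p.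

Lemma coefs_div_pow0 e : coefs_div_pow e 0.
Proof. by move=> k; exists 0; rewrite coef0 mul0r. Qed.

Lemma coefs_div_powD e p q :
  coefs_div_pow e p -> coefs_div_pow e q -> coefs_div_pow e (p + q).
Proof.
move=> hp hq k; have [r hr] := hp k; have [s hs] := hq k.
by exists (r + s); rewrite coefD hr hs mulrDl.
Qed.

Lemma coefs_div_powW e p : coefs_div_pow e.+1 p -> coefs_div_pow e p.
Proof.
by move=> hp k; have [r hr] := hp k; exists (r * a); rewrite hr addnS exprS mulrA.
Qed.

Lemma coefs_div_pow1 : coefs_div_pow 0 1.
Proof.
move=> [|k]; rewrite coef1 /=; first by exists 1; rewrite mul1r.
by exists 0; rewrite mul0r.
Qed.

Lemma coefs_div_powM e e' p q :
  coefs_div_pow e p -> coefs_div_pow e' q -> coefs_div_pow (e + e') (p * q).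
Proof.
move=> hp hq k; rewrite coefM.
apply: (big_ind (fun x => exists r, x = r * a ^+ (k + (e + e')))).
- by exists 0; rewrite mul0r.
- by move=> x y [r ->] [s ->]; exists (r + s); rewrite mulrDl.
move=> [j /= le_jk] _; have [r ->] := hp j; have [s ->] := hq (k - j)%N.
by exists (r * s); rewrite mulrACA -exprD addnACA subnKC.
Qed.

Lemma coefs_div_powX n p : coefs_div_pow 0 p -> coefs_div_pow 0 (p ^+ n).
Proof.
move=> hp; elim: n => [|n IH]; first exact: coefs_div_pow1.
by rewrite exprS; exact: (coefs_div_powM hp IH).
Qed.

Lemma coefs_div_pow_subXX n p q :
    coefs_div_pow 0 p -> coefs_div_pow 0 q -> coefs_div_pow 1 (p - q) ->
  coefs_div_pow 1 (p ^+ n - q ^+ n).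
Proof.
move=> hp hq hpq; elim: n => [|n IH]; first by rewrite subrr; exact: coefs_div_pow0.
have -> : p ^+ n.+1 - q ^+ n.+1 = p * (p ^+ n - q ^+ n) + (p - q) * q ^+ n.
  by rewrite !exprS mulrBr mulrBl addrA subrK.
apply: coefs_div_powD; first exact: (coefs_div_powM hp IH).
by rewrite -[1%N]addn0; exact: (coefs_div_powM hpq (coefs_div_powX n hq)).
Qed.

Lemma imD0 : imD 0.
Proof. by exists 0; rewrite deriv0 mulr0 subr0. Qed.

Lemma imDD p q : imD p -> imD q -> imD (p + q).
Proof.
move=> [h <-] [g <-]; exists (h + g).
by rewrite derivD mulrDr addrACA opprD.
Qed.

Lemma imD_monomial k c : imD ((c * a ^+ k.+1) *: 'X^k).
Proof.
elim: k c => [|k IH] c.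
  exists (- c%:P); rewrite derivN derivC oppr0 sub0r mulrN opprK.
  by rewrite alg_polyC -polyCM mulrC.
have [h hh] := IH (k.+1%:R * c).
exists (h - (c * a ^+ k.+1) *: 'X^(k.+1)).
rewrite derivB derivZ derivXn /= mulrBr opprB addrA.
rewrite -addrA (addrC (a%:P * _)) addrA (addrAC h^`()) hh.
rewrite -scalerMnr scalerMnl -mulrA mulr_natl -mulrnAl subrr add0r.
by rewrite mul_polyC scalerA mulrCA -exprS.
Qed.

Lemma imD_coefs_div_pow g : coefs_div_pow 1 g -> imD g.
Proof.
move=> hg; rewrite -[g]coefK poly_def.
apply: (big_ind imD imD0 imDD) => -[k _] _ /=.
by have [r ->] := hg k; rewrite addn1; exact: imD_monomial.
Qed.

End CoefsDivPow.

Lemma vord_geP (A : comAlgType rat) (a c : A) i :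
  vord_ge a c i -> exists r, c = r * a ^+ i.
Proof.
move=> [n [le_in [r ->]]]; exists (r * a ^+ (n - i)).
by rewrite -mulrA -exprD subnK.
Qed.

Theorem lemma2p13 (A : comAlgType rat) (a : A)
  (ha : forall x : A, a * x = 0 -> x = 0)
  (d : nat) (f : {poly A}) (hdeg : (size f <= d.+1)%N)
  (hc : forall i : nat, (i <= d)%N -> vord_ge a f`_i i)
  (t : nat) (ht : (t <= d)%N) (hct : vord_ge a f`_t t.+1)
  (m : nat) (hm : (1 <= m)%N) :
  in_imD a (f ^+ m) -> in_imD a ((f - (f`_t)%:P * 'X^t) ^+ m).
Proof.
set ft := f - _.
have hf : coefs_div_pow a 0 f.
  move=> k; rewrite addn0; have [le_kd | lt_dk] := leqP k d.
    exact: vord_geP (hc _ le_kd).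
  by exists 0; rewrite mul0r nth_default // (leq_trans hdeg lt_dk).
have hdiff : coefs_div_pow a 1 (ft - f).
  rewrite /ft addrAC subrr add0r mul_polyC => k.
  rewrite coefN coefZ coefXn mulr_natr; case: eqP => [->|_].
    by have [r ->] := vord_geP hct; exists (- r); rewrite addn1 mulNr.
  by exists 0; rewrite oppr0 mul0r.
have hft : coefs_div_pow a 0 ft.
  have -> : ft = ft - f + f by rewrite subrK.
  exact: coefs_div_powD (coefs_div_powW hdiff) hf.
have hdiffm := imD_coefs_div_pow (coefs_div_pow_subXX m hft hf hdiff).
have -> : ft ^+ m = (ft ^+ m - f ^+ m) + f ^+ m by rewrite subrK.
exact: imDD.
Qed.
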